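(* Let $\kappa$ be a cardinal with $\omega<\kappa<\mathfrak{c}$. Then there exists a Borel $\sigma$-ideal $I$ on $2^{\omega}$ (containing all singletons and not containing $2^\omega$) such that $\kappa$ is the maximal cardinal for which there is a family of $\kappa$ pairwise disjoint Borel subsets of $2^{\omega}$ none of which belongs to $I$. In particular, $I$ does not satisfy ccc, does not satisfy property (B), and satisfies the $\kappa^{+}$-chain condition (every family of pairwise disjoint Borel sets not in $I$ has size at most $\kappa$).
   Context: An ideal on a set $X$ is a family of subsets closed under finite unions and subsets; a $\sigma$-ideal is additionally closed under countable unions. An ideal $I$ on a Polish space $X$ is Borel if every $A\in I$ is contained in some Borel $B\in I$. $I$ satisfies ccc if every family of pairwise disjoint Borel sets not in $I$ is countable. Property (B) for $I$: there is a family of cardinality $\mathfrak{c}$ (the continuum) of pairwise disjoint Borel subsets of $X$ none of which belongs to $I$. *)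

From HB Require Import structures.
From mathcomp Require Import all_boot all_order all_algebra.
From mathcomp Require Import all_classical all_reals all_analysis.
Set Implicit Arguments. Unset Strict Implicit. Unset Printing Implicit Defensive.
Local Open Scope classical_set_scope.

Notation C2w := cantor_space.

Definition borel_set (A : set C2w) : Prop := <<s [set: C2w], open >> A.

Definition sigma_ideal (I : set (set C2w)) : Prop :=
  [/\ I set0,
      (forall A B, B `<=` A -> I A -> I B) &
      (forall F : nat -> set C2w, (forall n, I (F n)) -> I (\bigcup_n F n))].

Definition borel_ideal (I : set (set C2w)) : Prop :=
  forall A, I A -> exists B, [/\ borel_set B, I B & A `<=` B].

Definition disjoint_positive_family (I : set (set C2w)) (F : set (set C2w)) : Prop :=
  [/\ (forall A, F A -> borel_set A /\ ~ I A) &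
      (forall A B, F A -> F B -> A <> B -> A `&` B = set0)].

Definition ccc (I : set (set C2w)) : Prop :=
  forall F, disjoint_positive_family I F -> countable F.

Definition property_B (I : set (set C2w)) : Prop :=
  exists F, disjoint_positive_family I F /\ (F #= [set: C2w])%card.

From HB Require Import structures.
From mathcomp Require Import all_boot all_order all_algebra.
From mathcomp Require Import all_classical all_reals all_analysis.
Set Implicit Arguments. Unset Strict Implicit. Unset Printing Implicit Defensive.
Local Open Scope classical_set_scope.

(* Choose S in 2^omega with |S| = kappa and view 2^omega as 2^omega x 2^omega by
   interleaving coordinates.  Let I consist of the sets covered by a Borel set
   whose vertical slices over the points of S are all meager.  The columns over
   the points of S are kappa pairwise disjoint Borel sets outside I.  Conversely,
   a Borel set outside I has a nonmeager slice over some x in S, which by the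
   Baire property is comeager in some basic cylinder s; by the Baire category
   theorem two disjoint sets cannot share the pair (x, s), so a disjoint family
   of positive sets has at most |S x nat| = kappa members. *)

(** * Cylinders *)

Definition cyl (s : seq bool) : set C2w :=
  [set y | forall i, (i < size s)%N -> y i = nth false s i].

Definition pref (x : C2w) (n : nat) : seq bool := mkseq x n.

Lemma cyl_prefE (x y : C2w) n :
  cyl (pref x n) y <-> (forall i, (i < n)%N -> y i = x i).
Proof. by rewrite /cyl /pref size_mkseq; split=> H i ltin; rewrite H // nth_mkseq. Qed.

Lemma cyl_pref_self (x : C2w) n : cyl (pref x n) x.
Proof. exact/cyl_prefE. Qed.

Lemma cyl_pref_sub s (y : C2w) n :
  cyl s y -> (size s <= n)%N -> cyl (pref y n) `<=` cyl s.
Proof.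
move=> ys sn z /cyl_prefE zy i lis; rewrite zy ?ys //.
exact: leq_trans lis sn.
Qed.

Lemma open_coord (i : nat) (b : bool) : open [set y : C2w | y i = b].
Proof.
have /continuousP/(_ [set b]) : continuous (fun y : C2w => y i).
  by move=> x; exact: (@proj_continuous nat (fun=> bool) i x).
by apply; exact: discrete_open.
Qed.

Lemma open_agree (z : C2w) n : open [set y : C2w | forall i, (i < n)%N -> y i = z i].
Proof.
elim: n => [|n IH].
  have -> : [set y : C2w | forall i, (i < 0)%N -> y i = z i] = setT.
    by apply/seteqP; split=> // y _ i.
  exact: openT.
have -> : [set y : C2w | forall i, (i < n.+1)%N -> y i = z i] =
    [set y : C2w | forall i, (i < n)%N -> y i = z i] `&` [set y : C2w | y n = z n].
  apply/seteqP; split=> y /=.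
    by move=> H; split=> [i lin|]; apply: H => //; exact: ltnW.
  by move=> [H1 H2] i; rewrite ltnS leq_eqVlt => /orP[/eqP ->|/H1].
by apply: openI IH _; exact: open_coord.
Qed.

Lemma open_cyl s : open (cyl s).
Proof. exact: (open_agree (nth false s) (size s)). Qed.

Lemma nbhs_cyl (x : C2w) U : nbhs x U -> exists n, cyl (pref x n) `<=` U.
Proof.
pose G := filter_from [set: nat] (fun n => cyl (pref x n)).
have FG : Filter G.
  apply: filter_from_filter; first by exists 0%N.
  move=> i j _ _; exists (maxn i j) => // y /cyl_prefE H.
  by split; apply/cyl_prefE => k lk; apply: H; rewrite leq_max lk ?orbT.
have : G --> (x : C2w).
  apply/(@cvg_sup _ _ _ G x FG) => i A /=.
  rewrite (@nbhsE (Topological.Pack _)) => -[B [[C oC eC] Bx] BA].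
  exists i.+1 => // y /cyl_prefE yx; apply: BA; rewrite -eC /= yx //.
  by move: Bx; rewrite -eC.
by move=> /(_ U) H /H [n _ Hn]; exists n.
Qed.

Lemma open_of_cyl (U : set C2w) :
  (forall y, U y -> exists n, cyl (pref y n) `<=` U) -> open U.
Proof.
move=> H; rewrite openE => y /H [n Hn]; apply: filterS Hn _.
by apply: open_nbhs_nbhs; split; [exact: open_cyl | exact: cyl_pref_self].
Qed.

(** * Meager sets and the Baire category theorem *)

Definition nowhere_dense (N : set C2w) :=
  forall s, exists t, cyl t `<=` cyl s /\ cyl t `&` N = set0.

Definition meager (M : set C2w) :=
  exists N : nat -> set C2w, (forall k, nowhere_dense (N k)) /\ M `<=` \bigcup_k N k.

Lemma nowhere_denseS (N N' : set C2w) : N' `<=` N -> nowhere_dense N -> nowhere_dense N'.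
Proof.
move=> N'N H s; have [t [ts tN]] := H s; exists t; split=> //.
by apply/seteqP; split=> // y [yt /N'N yN]; rewrite -tN.
Qed.

Lemma nowhere_dense0 : nowhere_dense set0.
Proof. by move=> s; exists s; split=> //; rewrite setI0. Qed.

Lemma nowhere_dense_meager N : nowhere_dense N -> meager N.
Proof. by move=> H; exists (fun=> N); split=> // y Ny; exists 0%N. Qed.

Lemma meagerS (M M' : set C2w) : M' `<=` M -> meager M -> meager M'.
Proof. by move=> M'M [N [nN MN]]; exists N; split=> // y /M'M /MN. Qed.

Lemma meager0 : meager set0.
Proof. exact/nowhere_dense_meager/nowhere_dense0. Qed.

Lemma meager_bigcup (M : nat -> set C2w) :
  (forall n, meager (M n)) -> meager (\bigcup_n M n).
Proof.
move=> /choice[N HN].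
have := card_nat2; rewrite card_eq_le => /andP[/pcard_injP[pr prinj] _].
exists (fun k => \bigcup_(p in [set p | pr p = k]) N p.1 p.2); split.
  move=> k; have [[p pk]|np] := pselect (exists p, pr p = k).
    apply: (@nowhere_denseS (N p.1 p.2)); last exact: (proj1 (HN p.1) p.2).
    by move=> y [q /= qk]; rewrite (prinj q p) ?in_setT ?qk ?pk.
  apply: (@nowhere_denseS set0); last exact: nowhere_dense0.
  by move=> y [q /= qk]; exfalso; apply: np; exists q.
move=> y [n _ /(proj2 (HN n))[j _ yj]].
by exists (pr (n, j)) => //; exists (n, j).
Qed.

Lemma meagerU (A B : set C2w) : meager A -> meager B -> meager (A `|` B).
Proof.
move=> mA mB; apply: (@meagerS (\bigcup_n (if n is 0 then A else B))).
  by move=> y [Ay|By]; [exists 0%N | exists 1%N].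
by apply: meager_bigcup => -[|n].
Qed.

Lemma nowhere_dense_subsingleton (N : set C2w) :
  (forall a b, N a -> N b -> a = b) -> nowhere_dense N.
Proof.
move=> N1 s; have [[q Nq]|nN] := pselect (exists q, N q); last first.
  by exists s; split=> //; apply/seteqP; split=> // y [_ Ny]; apply: nN; exists y.
(* extend [s] by a bit on which the unique point [q] of [N] disagrees *)
pose w : C2w := fun i => if (i < size s)%N then nth false s i else ~~ q i.
have ws : cyl s w by move=> i lis; rewrite /w lis.
exists (pref w (size s).+1); split; first exact: cyl_pref_sub.
apply/seteqP; split=> // z [/cyl_prefE zw /N1/(_ Nq) zq].
by have := zw (size s) (ltnSn _); rewrite /w ltnn zq; case: (q (size s)).
Qed.

Lemma nowhere_dense_shrink (x : C2w) n N : nowhere_dense N ->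
  exists ym : C2w * nat, [/\ (n < ym.2)%N, cyl (pref ym.1 ym.2) `<=` cyl (pref x n)
                         & cyl (pref ym.1 ym.2) `&` N = set0].
Proof.
move=> /(_ (pref x n.+1))[t [tx tN]].
pose m := maxn (size t) n.+1.
have ztm : cyl (pref (nth false t) m) `<=` cyl t by apply: cyl_pref_sub; rewrite ?leq_maxl.
exists (nth false t, m); split=> /=.
- by rewrite leq_max leqnn orbT.
- apply: subset_trans ztm (subset_trans tx _).
  by apply: cyl_pref_sub; [exact: cyl_pref_self | rewrite size_mkseq].
- by apply/seteqP; split=> // y [/ztm yt yN]; rewrite -tN.
Qed.

Lemma nested_cyl_point (y : nat -> C2w) (m : nat -> nat) :
  (forall k, cyl (pref (y k.+1) (m k.+1)) `<=` cyl (pref (y k) (m k))) ->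
  (forall k, (k <= m k)%N) ->
  exists x, forall k, cyl (pref (y k) (m k)) x.
Proof.
move=> decr grow.
have nest k j : (k <= j)%N -> cyl (pref (y j) (m j)) `<=` cyl (pref (y k) (m k)).
  elim: j => [|j IH]; first by rewrite leqn0 => /eqP ->.
  by rewrite leq_eqVlt => /orP[/eqP -> //|/IH]; apply: subset_trans.
exists (fun i => y i.+1 i) => k; apply/cyl_prefE => i ltik.
pose j := maxn k i.+1.
have /cyl_prefE/(_ i ltik) <- := nest k j (leq_maxl _ _) _ (@cyl_pref_self _ _).
by have /cyl_prefE/(_ i (grow i.+1)) := nest i.+1 j (leq_maxr _ _) _ (@cyl_pref_self _ _).
Qed.

Theorem cyl_nonmeager s : ~ meager (cyl s).
Proof.
move=> [N [nN sN]].
have /choice[next Hnext] (kp : nat * (C2w * nat)) :=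
  nowhere_dense_shrink kp.2.1 kp.2.2 (nN kp.1).
pose seqp := fix seqp k := if k is k'.+1 then next (k', seqp k') else (nth false s, size s).
have [x Hx] : exists x, forall k, cyl (pref (seqp k).1 (seqp k).2) x.
  apply: nested_cyl_point => [k|]; first by have [] := Hnext (k, seqp k).
  elim=> // k IH; have [lt _ _] := Hnext (k, seqp k).
  exact: leq_ltn_trans IH lt.
have [k _ Nkx] : (\bigcup_k N k) x.
  by apply/sN/(cyl_pref_sub (y:=nth false s) _ (leqnn _) (Hx 0%N)).
have [_ _ disj] := Hnext (k, seqp k).
by have : (set0 : set C2w) x by rewrite -disj; split=> //; exact: (Hx k.+1).
Qed.

Lemma comeager_cyl_disjoint s (P Q : set C2w) :
  meager (cyl s `\` P) -> meager (cyl s `\` Q) -> P `&` Q = set0 -> False.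
Proof.
move=> mP mQ PQ; apply: (@cyl_nonmeager s); apply: (meagerS _ (meagerU mP mQ)).
move=> y ys; have [Py|] := pselect (P y); last by left.
have [Qy|] := pselect (Q y); last by right.
by have : (set0 : set C2w) y by rewrite -PQ.
Qed.

(** * The Baire property of Borel sets *)

Definition cylU (D : set (seq bool)) : set C2w := \bigcup_(s in D) cyl s.

Definition baire_property (A : set C2w) :=
  exists D, meager (A `\` cylU D) /\ meager (cylU D `\` A).

Lemma baire_property_open U : open U -> baire_property U.
Proof.
move=> oU; exists [set s | cyl s `<=` U]; split; apply: (meagerS _ meager0).
  move=> y [Uy nUy]; apply: nUy.
  have [n Hn] := @nbhs_cyl y U (open_nbhs_nbhs (conj oU Uy)).
  by exists (pref y n) => //; exact: cyl_pref_self.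
by move=> y [[s sU ys] nU]; apply/nU/sU.
Qed.

Lemma nowhere_dense_cylU_boundary D :
  nowhere_dense (~` cylU D `\` cylU [set t | cyl t `&` cylU D = set0]).
Proof.
move=> s; have [e|/eqP/set0P[y [ys [d Dd yd]]]] := pselect (cyl s `&` cylU D = set0).
  exists s; split=> //; apply/seteqP; split=> // y [ys [_ nyD']].
  by apply: nyD'; exists s.
exists (pref y (maxn (size s) (size d))); split.
  by apply: cyl_pref_sub; rewrite ?leq_maxl.
apply/seteqP; split=> // z [zt [nzD _]]; apply: nzD; exists d => //.
exact: (cyl_pref_sub yd (leq_maxr _ _) zt).
Qed.

Lemma baire_propertyC A : baire_property A -> baire_property (~` A).
Proof.
move=> [D [mAD mDA]]; exists [set t | cyl t `&` cylU D = set0]; split.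
  apply: (meagerS _ (meagerU mDA (nowhere_dense_meager (nowhere_dense_cylU_boundary D)))).
  by move=> y [nAy nD'y]; have [yD|nyD] := pselect (cylU D y); [left | right].
apply: (meagerS _ mAD) => y [[t D't yt] /= nnA]; split; first exact: contrapT.
by move=> yD; have : (set0 : set C2w) y by rewrite -D't.
Qed.

Lemma baire_property_bigcup (A : nat -> set C2w) :
  (forall n, baire_property (A n)) -> baire_property (\bigcup_n A n).
Proof.
move=> /choice[D HD]; exists (\bigcup_n D n); split.
  apply: (@meagerS (\bigcup_n (A n `\` cylU (D n)))); last first.
    by apply: meager_bigcup => n; have [] := HD n.
  move=> y [[n _ Ay] nD]; exists n => //; split=> // -[s Ds ys].
  by apply: nD; exists s => //; exists n.
apply: (@meagerS (\bigcup_n (cylU (D n) `\` A n))); last first.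
  by apply: meager_bigcup => n; have [] := HD n.
move=> y [[s [n _ Ds] ys] nA]; exists n => //; split; first by exists s.
by move=> An; apply: nA; exists n.
Qed.

Lemma borel_baire_property A : borel_set A -> baire_property A.
Proof.
apply: smallest_sub; last by move=> U; exact: baire_property_open.
split.
- exact: baire_property_open open0.
- by move=> B HB; rewrite setTD; exact: baire_propertyC.
- exact: baire_property_bigcup.
Qed.

Lemma borel_nonmeager_comeager_cyl A :
  borel_set A -> ~ meager A -> exists s, meager (cyl s `\` A).
Proof.
move=> /borel_baire_property[D [mAD mDA]] nmA.
have [[s Ds]|nD] := pselect (exists s, D s).
  by exists s; apply: (meagerS _ mDA) => y [ys nAy]; split=> //; exists s.
exfalso; apply: nmA; apply: (meagerS _ mAD) => y Ay.
by split=> // -[s Ds _]; apply: nD; exists s.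
Qed.

(** * Slices and columns *)

Definition interleave (x y : C2w) : C2w := fun i => if odd i then y i./2 else x i./2.

Definition slice (x : C2w) (B : set C2w) : set C2w := interleave x @^-1` B.

Definition column (x : C2w) : set C2w := [set z | forall i, z i.*2 = x i].

Lemma interleave_even x y i : interleave x y i.*2 = x i.
Proof. by rewrite /interleave odd_double doubleK. Qed.

Lemma interleave_odd x y i : interleave x y i.*2.+1 = y i.
Proof. by rewrite /interleave /= odd_double /= uphalf_double. Qed.

Lemma column_interleave x y : column x (interleave x y).
Proof. by move=> i; rewrite interleave_even. Qed.

Lemma column_eq x x' z : column x z -> column x' z -> x = x'.
Proof. by move=> xz x'z; apply: funext => i; rewrite -xz x'z. Qed.

Lemma open_interleave_preimage x U : open U -> open (interleave x @^-1` U).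
Proof.
move=> oU; apply: open_of_cyl => y Uy.
have [n Hn] := @nbhs_cyl (interleave x y) U (open_nbhs_nbhs (conj oU Uy)).
exists n => z /cyl_prefE zy; apply: Hn; apply/cyl_prefE => i lin.
rewrite /interleave; case: (odd i) => //; rewrite zy //; apply: leq_ltn_trans lin.
by rewrite -[X in (_ <= X)%N](odd_double_half i) -addnn addnA leq_addl.
Qed.

Lemma borel_slice x B : borel_set B -> borel_set (slice x B).
Proof.
suff : borel_set `<=` [set B | borel_set (interleave x @^-1` B)] by apply.
apply: smallest_sub; last first.
  by move=> U oU; apply: sub_sigma_algebra; exact: open_interleave_preimage.
split=> [|B0 /= HB|F HF /=].
- by rewrite /= preimage_set0; exact: sigma_algebra0.
- by rewrite setTD -preimage_setC -setTD; exact: sigma_algebraCD.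
- by rewrite preimage_bigcup; exact: sigma_algebra_bigcup.
Qed.

Lemma borel_closed (C : set C2w) : closed C -> borel_set C.
Proof.
move=> cC; rewrite -[C]setCK -setTD; apply: sigma_algebraCD.
by apply: sub_sigma_algebra; exact: closed_openC.
Qed.

Lemma borel_set1 p : borel_set [set p].
Proof.
apply: borel_closed.
exact: (accessible_closed_set1 (hausdorff_accessible cantor_space_hausdorff)).
Qed.

Lemma borel_column x : borel_set (column x).
Proof.
apply: borel_closed.
rewrite (_ : column x = \bigcap_i [set z : C2w | z i.*2 = x i]); last first.
  by apply/seteqP; split=> z Hz i; [move=> _; exact: Hz | exact: Hz].
apply: closed_bigI => i _; rewrite -openC.
rewrite (_ : ~` _ = [set z : C2w | z i.*2 = ~~ x i]); first exact: open_coord.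
by apply/seteqP; split=> z /=; case: (z i.*2); case: (x i).
Qed.

Lemma meager_slice_set1 x p : meager (slice x [set p]).
Proof.
apply/nowhere_dense_meager/nowhere_dense_subsingleton => a b pa pb.
by apply: funext => i; rewrite -(interleave_odd x a) -(interleave_odd x b) pa pb.
Qed.

(** * Infinite sets absorb countable factors *)

Lemma chain_bigcup_common T (F : set (set T)) u v : total_on F subset ->
  (\bigcup_(H in F) H) u -> (\bigcup_(H in F) H) v -> exists2 H, F H & H u /\ H v.
Proof.
move=> Ftot [H FH Hu] [H' FH' H'v].
have [HH'|H'H] := Ftot _ _ FH FH'.
  by exists H' => //; split=> //; exact: HH'.
by exists H => //; split=> //; exact: H'H.
Qed.

Section Absorption.
Variables (X : pointedType) (A : set X).

(* A relation [G] is the graph of an injection [D * nat -> D] with [D] its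
   domain, a subset of [A]. *)
Definition absorbing (G : set ((X * nat) * X)) :=
  [/\ forall p b, G (p, b) -> A p.1,
      forall p b b', G (p, b) -> G (p, b') -> b = b',
      forall p p' b, G (p, b) -> G (p', b) -> p = p',
      forall a n m b, G ((a, m), b) -> exists c, G ((a, n), c) &
      forall p b, G (p, b) -> exists m c, G ((b, m), c)].

Definition absorbing_dom (G : set ((X * nat) * X)) := [set a | exists m c, G ((a, m), c)].

Lemma exists_maximal_absorbing :
  exists G, absorbing G /\ forall G', G `<` G' -> ~ absorbing G'.
Proof.
apply: (@Zorn_bigcup _ absorbing) => F FP Ftot; split.
- by move=> p b [H /FP[Hdom _ _ _ _] Hb]; exact: Hdom Hb.
- move=> p b b' Gb Gb'; have [H /FP[_ Hfun _ _ _] [Hb Hb']] := chain_bigcup_common Ftot Gb Gb'.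
  exact: Hfun Hb Hb'.
- move=> p p' b Gp Gp'; have [H /FP[_ _ Hinj _ _] [Hp Hp']] := chain_bigcup_common Ftot Gp Gp'.
  exact: Hinj Hp Hp'.
- move=> a n m b [H FH Hb]; have [_ _ _ Htot _] := FP _ FH.
  by have [c Hc] := Htot _ n _ _ Hb; exists c, H.
- move=> p b [H FH Hb]; have [_ _ _ _ Hrng] := FP _ FH.
  by have [m [c Hc]] := Hrng _ _ Hb; exists m, c, H.
Qed.

Section Extension.
Variables (G : set ((X * nat) * X)) (h : nat -> X) (pr : nat * nat -> nat).
Hypotheses (absG : absorbing G) (hinj : injective h) (prinj : injective pr).
Hypotheses (hA : forall i, A (h i)) (hD : forall i, ~ absorbing_dom G (h i)).

Let G' := G `|` [set q | exists i n, q = ((h i, n), h (pr (i, n)))].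

Lemma absorbing_extend : G `<` G' /\ absorbing G'.
Proof.
have [Gdom Gfun Ginj Gtot Grng] := absG.
have GD p b : G (p, b) -> absorbing_dom G p.1 /\ absorbing_dom G b.
  case: p => a n Gb; split; first by exists n, b.
  by have [m [c Hc]] := Grng _ _ Gb; exists m, c.
split.
  split; first by move=> q Gq; left.
  move=> /(_ ((h 0, 0), h (pr (0, 0))))%N GG'.
  have /GD[/hD] // : G ((h 0, 0), h (pr (0, 0)))%N by apply: GG'; right; exists 0%N, 0%N.
split.
- by move=> p b [/Gdom //|[i [n [-> _]]]]; exact: hA.
- move=> p b b' [Gb|[i [n [-> ->]]]] [Gb'|[i' [n' [e ->]]]].
  + exact: Gfun Gb Gb'.
  + by have [] := GD _ _ Gb; rewrite e => /hD.
  + by have [] := GD _ _ Gb' => /hD.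
  + by rewrite (hinj e).
- move=> p p' b [Gb|[i [n [-> ->]]]] [Gb'|[i' [n' [-> e]]]].
  + exact: Ginj Gb Gb'.
  + by have [_] := GD _ _ Gb; rewrite e => /hD.
  + by have [_] := GD _ _ Gb' => /hD.
  + by move: e => /hinj/prinj[-> ->].
- move=> a n m b [Gb|[i [n' /(congr1 (fun q => q.1.1)) /= ->]]].
    by have [c Hc] := Gtot _ n _ _ Gb; exists c; left.
  by exists (h (pr (i, n))); right; exists i, n.
- move=> p b [Gb|[i [n [_ ->]]]].
    by have [m [c Hc]] := Grng _ _ Gb; exists m, c; left.
  by exists 0%N, (h (pr (pr (i, n), 0%N))); right; exists (pr (i, n)), 0%N.
Qed.

End Extension.

Lemma absorbing_maximal_cofinite G : absorbing G ->
  (forall G', G `<` G' -> ~ absorbing G') -> finite_set (A `\` absorbing_dom G).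
Proof.
move=> absG Gmax; apply: contrapT => /infiniteP/pcard_leP/injfunPex[h hfun hinj].
have := card_nat2; rewrite card_eq_le => /andP[/pcard_injP[pr prinj] _].
have [GG' absG'] := @absorbing_extend G h pr absG
  (fun i j => hinj i j (mem_set I) (mem_set I)) (fun i j => prinj i j (mem_set I) (mem_set I))
  (fun i => (hfun i I).1) (fun i => (hfun i I).2).
exact: Gmax GG' absG'.
Qed.

Lemma absorbing_graph G : absorbing G ->
  exists g : X * nat -> X, (forall p, absorbing_dom G p.1 -> absorbing_dom G (g p)) /\
    (forall p p', absorbing_dom G p.1 -> absorbing_dom G p'.1 -> g p = g p' -> p = p').
Proof.
move=> [_ _ Ginj Gtot Grng].
have /choice[g Hg] p : exists b, absorbing_dom G p.1 -> G (p, b).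
  case: p => a n; have [[m [c /(Gtot _ n)[b Gb]]]|] := pselect (absorbing_dom G a).
    by exists b.
  by exists a.
exists g; split=> [p /Hg/Grng[m [c Gc]]|p p' /Hg Gp /Hg Gp' e]; first by exists m, c.
by apply: Ginj Gp _; rewrite e.
Qed.

Lemma card_setX_countable_le (Y : Type) (B : set Y) :
  infinite_set A -> countable B -> (A `*` B #<= A)%card.
Proof.
move=> Ainf /countable_injP[eB eBinj].
have [G [absG Gmax]] := exists_maximal_absorbing.
have [g [gD ginj]] := absorbing_graph absG.
have DA : absorbing_dom G `<=` A by move=> a [m [c]]; case: absG => + _ _ _ _; apply.
have cofin := absorbing_maximal_cofinite absG Gmax.
have [d0 Dd0] : absorbing_dom G !=set0.
  apply: infinite_setN0 => Dfin; apply: Ainf.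
  apply: (@sub_finite_set _ _ (absorbing_dom G `|` (A `\` absorbing_dom G))).
    by move=> a Aa; have [Da|nDa] := pselect (absorbing_dom G a); [left | right].
  by rewrite finite_setU.
have /finite_set_countable/countable_injP[e einj] := cofin.
(* [k] embeds [A] into [absorbing_dom G * nat]: the finitely many points outside
   the domain are sent to the fibre over [d0] *)
pose k a := if pselect (absorbing_dom G a) then (a, 0%N) else (d0, (e a).+1).
have kD a : absorbing_dom G (k a).1 by rewrite /k; case: pselect.
apply/pcard_leP/injfunPex; exists (fun ab => g (g (k ab.1), eB ab.2)).
  by move=> [a b] _; apply/DA/gD/gD.
move=> [a b] [a' b']; rewrite !inE => -[Aa Bb] [Aa' Bb'] /= gg.
have /pair_equal_spec[/(ginj _ _ (kD a) (kD a')) ekk ebb] :=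
  ginj (g (k a), eB b) (g (k a'), eB b') (gD _ (kD a)) (gD _ (kD a')) gg.
have -> : b = b' by apply: eBinj; rewrite ?inE.
congr (_, _); move: ekk; rewrite /k.
case: pselect => Da; case: pselect => Da' //= -[] // ee.
by apply: einj; rewrite ?inE.
Qed.

End Absorption.

(** * The ideal of sets with meager slices *)

Section SliceMeagerIdeal.
Variable S : set C2w.

Definition slice_meager_ideal : set (set C2w) :=
  [set A | exists B, [/\ borel_set B, A `<=` B & forall x, S x -> meager (slice x B)]].

Local Notation I := slice_meager_ideal.

Lemma slice_meager_sigma_ideal : sigma_ideal I.
Proof.
split.
- exists set0; split=> //; first exact: sigma_algebra0.
  by move=> x _; apply: (meagerS _ meager0).
- by move=> A B BA [C [bC AC mC]]; exists C; split=> // y /BA /AC.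
- move=> F /choice[B HB]; exists (\bigcup_n B n); split.
  + by apply: sigma_algebra_bigcup => n; have [] := HB n.
  + by move=> y [n _ Fy]; exists n => //; have [_ + _] := HB n; apply.
  + move=> x Sx; rewrite [slice _ _]preimage_bigcup.
    by apply: meager_bigcup => n; have [_ _ /(_ x Sx)] := HB n.
Qed.

Lemma slice_meager_borel_ideal : borel_ideal I.
Proof. by move=> A [B [bB AB mB]]; exists B; split=> //; exists B; split. Qed.

Lemma slice_meager_set1 p : I [set p].
Proof. by exists [set p]; split=> //; [exact: borel_set1 | move=> x _; exact: meager_slice_set1]. Qed.

Lemma slice_meager_column x : S x -> ~ I (column x).
Proof.
move=> Sx [B [_ cB /(_ x Sx) mB]]; apply: (@cyl_nonmeager [::]); apply: (meagerS _ mB).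
by move=> y _; apply/cB/column_interleave.
Qed.

Lemma slice_meager_setT : S !=set0 -> ~ I [set: C2w].
Proof.
move=> [x Sx]; have [_ Isub _] := slice_meager_sigma_ideal.
by move=> /(Isub _ (column x) (subsetT _)); exact: slice_meager_column.
Qed.

Lemma slice_meager_comeager_cyl A : borel_set A -> ~ I A ->
  exists x s, S x /\ meager (cyl s `\` slice x A).
Proof.
move=> bA nIA; have [x [Sx nmA]] : exists x, S x /\ ~ meager (slice x A).
  apply: contrapT => H; apply: nIA; exists A; split=> // x Sx.
  by apply: contrapT => nm; apply: H; exists x.
by have [s ms] := borel_nonmeager_comeager_cyl (borel_slice x bA) nmA; exists x, s.
Qed.

Lemma slice_meager_columns_family :
  disjoint_positive_family I (column @` S) /\ (column @` S #= S)%card.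
Proof.
have column_inj : {in S &, injective column}.
  move=> x x' _ _ e; have := column_interleave x point; rewrite e.
  exact: column_eq (column_interleave x point).
split; last exact: inj_card_eq.
split=> [_ [x Sx <-]|_ _ [x Sx <-] [x' Sx' <-] ne].
  by split; [exact: borel_column | exact: slice_meager_column].
apply/seteqP; split=> // z [xz x'z].
by apply: ne; rewrite (column_eq xz x'z).
Qed.

Lemma slice_meager_family_card_le_setX F :
  disjoint_positive_family I F -> (F #<= S `*` [set: nat])%card.
Proof.
move=> [Fpos Fdisj].
have /choice[pin Hpin] A : exists p : C2w * seq bool,
    F A -> S p.1 /\ meager (cyl p.2 `\` slice p.1 A).
  have [FA|nFA] := pselect (F A); last by exists (point, [::]).
  have [bA nIA] := Fpos A FA.
  by have [x [s [Sx ms]]] := slice_meager_comeager_cyl bA nIA; exists (x, s).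
apply/pcard_leP/injfunPex; exists (fun A => ((pin A).1, pickle (pin A).2)).
  by move=> A FA; split=> //; have [] := Hpin A FA.
move=> A A'; rewrite !inE => FA FA' /pair_equal_spec[e1 /(pcan_inj pickleK) e2].
apply: contrapT => ne; have [_ mA] := Hpin A FA.
have [_] := Hpin A' FA'; rewrite -e1 -e2 => mA'.
apply: comeager_cyl_disjoint mA mA' _.
by rewrite /slice -preimage_setI Fdisj // preimage_set0.
Qed.

Lemma slice_meager_family_card_le F :
  infinite_set S -> disjoint_positive_family I F -> (F #<= S)%card.
Proof.
move=> Sinf /slice_meager_family_card_le_setX FS; apply: card_le_trans FS _.
by apply: card_setX_countable_le; last exact: countableP.
Qed.

End SliceMeagerIdeal.

Theorem theorem1p1 (T : Type) (K : set T)
  (hK1 : ~ countable K)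
  (hK2 : (K #<= [set: C2w])%card)
  (hK3 : ~ ([set: C2w] #<= K)%card) :
  exists I : set (set C2w),
    [/\ sigma_ideal I, borel_ideal I,
        (forall x : C2w, I [set x]) & ~ I [set: C2w]] /\
    [/\ (exists F, disjoint_positive_family I F /\ (F #= K)%card),
        (forall F, disjoint_positive_family I F -> (F #<= K)%card),
        ~ ccc I & ~ property_B I].
Proof.
have /pcard_injP[f finj] := hK2.
pose S := f @` K.
have SK : (S #= K)%card := inj_card_eq finj.
have Sunc : ~ countable S by rewrite (eq_countable SK).
have Sinf : infinite_set S by move=> /finite_set_countable.
have [colpos colS] := slice_meager_columns_family S.
have colK := card_eq_trans colS SK.
have bound F : disjoint_positive_family (slice_meager_ideal S) F -> (F #<= K)%card.
  by move=> posF; rewrite -(card_le_eqr SK); exact: slice_meager_family_card_le.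
exists (slice_meager_ideal S); split; split.
- exact: slice_meager_sigma_ideal.
- exact: slice_meager_borel_ideal.
- exact: slice_meager_set1.
- exact/slice_meager_setT/infinite_setN0.
- by exists (column @` S).
- exact: bound.
- by move=> ccc_I; apply: hK1; rewrite -(eq_countable colK); exact: ccc_I.
- move=> [F [posF FT]]; apply: hK3; apply: card_le_trans (bound F posF).
  by move: FT; rewrite card_eq_sym card_eq_le => /andP[].
Qed.
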